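(* Let $G$ be a connected weighted multigraph on the vertex set $V$, $|V|=n\ge 2$, with positive edge weights, weighted adjacency matrix $A$ and spectral radius $\rho$. For $\alpha>0$ put $t=(\rho+\alpha^{-1})^{-1}\in(0,\rho^{-1})$, $R_t=(I-tA)^{-1}=(r_{ij}(t))$, and $$d^{W}_\alpha(i,j)=\theta\Bigl(\tfrac12\bigl(\ln r_{ii}(t)+\ln r_{jj}(t)\bigr)-\ln r_{ij}(t)\Bigr),\qquad \theta=\ln\bigl(e+\alpha^{2/n}\bigr)\frac{\alpha-1}{\ln\alpha}$$ (with $\theta=\ln(e+1)$ when $\alpha=1$). Then for all $i,j\in V$, $$\lim_{\alpha\to0^+}d^{W}_\alpha(i,j)=d^{s}(i,j),$$ where $d^s(i,j)$ is the shortest path distance, i.e. the minimum number of edges of a path between $i$ and $j$ in $G$.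
   Context: $G$ may have loops and multiple edges; $A=(a_{ij})$ has $a_{ij}$ equal to the sum of the weights of the edges joining $i$ and $j$. *)

From HB Require Import structures.
From mathcomp Require Import all_boot all_order all_algebra.
From mathcomp Require Import all_classical all_reals all_analysis.
Set Implicit Arguments. Unset Strict Implicit. Unset Printing Implicit Defensive.
Import Order.TTheory GRing.Theory Num.Theory.
Import numFieldNormedType.Exports.
Local Open Scope classical_set_scope.
Local Open Scope ring_scope.

(* A weighted multigraph (loops, multiple edges, positive weights) on 'I_n is
   encoded by its weighted adjacency matrix A: a_ij = sum of weights of edges
   joining i and j. *)
Definition wadj_matrix (R : realType) (n : nat) (A : 'M[R]_n) : Prop :=
  (forall i j, 0 <= A i j) /\ A^T = A.

Definition adj (R : realType) (n : nat) (A : 'M[R]_n) : rel 'I_n :=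
  fun i j => 0 < A i j.

Definition connected_graph (R : realType) (n : nat) (A : 'M[R]_n) : Prop :=
  forall i j : 'I_n, exists s : seq 'I_n, path (adj A) i s /\ last i s = j.

Definition is_path (R : realType) (n : nat) (A : 'M[R]_n) (i j : 'I_n)
    (s : seq 'I_n) : Prop :=
  path (adj A) i s /\ last i s = j /\ uniq (i :: s).

Definition sp_dist (R : realType) (n : nat) (A : 'M[R]_n) (i j : 'I_n)
    (k : nat) : Prop :=
  (exists s, is_path A i j s /\ size s = k) /\
  (forall s, is_path A i j s -> (k <= size s)%N).

(* spectral radius: max modulus of the eigenvalues (A is real symmetric, so
   all its eigenvalues are real) *)
Definition specrad (R : realType) (n : nat) (A : 'M[R]_n) : R :=
  sup [set `|a| | a in [set a : R | eigenvalue A a]].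

Definition theta (R : realType) (n : nat) (alpha : R) : R :=
  if alpha == 1 then ln (expR 1 + 1)
  else ln (expR 1 + alpha `^ (2 / n%:R)) * ((alpha - 1) / ln alpha).

Definition resolvent_t (R : realType) (n : nat) (A : 'M[R]_n) (alpha : R)
  : 'M[R]_n :=
  let t := (specrad A + alpha^-1)^-1 in invmx (1%:M - t *: A).

Definition dW (R : realType) (n : nat) (A : 'M[R]_n) (alpha : R)
    (i j : 'I_n) : R :=
  let r := resolvent_t A alpha in
  theta n alpha * ((ln (r i i) + ln (r j j)) / 2 - ln (r i j)).

From HB Require Import structures.
From mathcomp Require Import all_boot all_order all_algebra.
From mathcomp Require Import all_classical all_reals all_analysis.
From mathcomp Require Import ring lra.
Set Implicit Arguments.
Unset Strict Implicit.
Unset Printing Implicit Defensive.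
Import Order.TTheory GRing.Theory Num.Theory.
Import numFieldNormedType.Exports.
Local Open Scope classical_set_scope.
Local Open Scope ring_scope.

(* As alpha -> 0+, the parameter t = (rho + 1/alpha)^-1 behaves like alpha, so
   only small t matters. For such t the resolvent R_t = (I - tA)^-1 is bounded
   and R_t = sum_(m < N) t^m A^m + t^N R_t A^N. Since (A^m)_ij > 0 exactly when
   there is a walk of length m from i to j, the first nonzero term at (i, j) is
   the one with m = d^s(i, j) = k: r_ii = 1 + O(t) and
   r_ij = t^k ((A^k)_ij + O(t)). The bracket in d^W is therefore -k ln t + O(1),
   and theta ~ -1/ln alpha turns it into k. *)

Section WalkCount.
Variables (R : realType) (n : nat) (A : 'M[R]_n.+1).
Hypothesis A_ge0 : forall i j, 0 <= A i j.

Lemma expmx_ge0 m i j : 0 <= (A ^+ m) i j.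
Proof.
elim: m i j => [|m IHm] i j; first by rewrite expr0 mxE ler0n.
by rewrite exprS -mulmxE mxE; apply: sumr_ge0 => l _; apply: mulr_ge0.
Qed.

Lemma expmx_gt0_walk m i j : 0 < (A ^+ m) i j ->
  exists s, [/\ path (adj A) i s, last i s = j & size s = m].
Proof.
elim: m i j => [|m IHm] i j.
  by rewrite expr0 mxE; case: eqP => [<- _|_]; [exists [::] | rewrite ltxx].
rewrite exprS -mulmxE mxE lt0r psumr_neq0; last first.
  by move=> l _; rewrite mulr_ge0 ?expmx_ge0.
case/andP=> /hasP[l _ /=]; rewrite mulr_ge0_gt0 ?expmx_ge0 //.
case/andP=> Ail_gt0 /IHm[s [ls_path ls_last ls_size]] _.
by exists (l :: s); split; rewrite /= ?ls_size ?ls_path ?andbT.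
Qed.

Lemma walk_expmx_gt0 s i : path (adj A) i s -> 0 < (A ^+ size s) i (last i s).
Proof.
elim: s i => [|l s IHs] i /=; first by rewrite expr0 mxE eqxx ltr01.
case/andP => Ail_gt0 /IHs ls_gt0; rewrite exprS -mulmxE mxE (bigD1 l) //=.
by rewrite ltr_pwDl ?mulr_gt0 // sumr_ge0 // => l' _; rewrite mulr_ge0 ?expmx_ge0.
Qed.

Lemma sp_dist_expmx i j k : sp_dist A i j k ->
  0 < (A ^+ k) i j /\ forall m, (m < k)%N -> (A ^+ m) i j = 0.
Proof.
case=> [[s [[s_path [s_last _]] <-]] k_min].
split; first by rewrite -s_last walk_expmx_gt0.
move=> m m_lt_k; apply/eqP; rewrite eq_le expmx_ge0 andbT leNgt; apply/negP.
case/expmx_gt0_walk => w [w_path w_last w_size].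
case: (shortenP w_path) w_last => p p_path p_uniq p_sub p_last.
have p_le_w : (size p <= size w)%N by case/andP: p_uniq => _ /uniq_leq_size; apply.
have := k_min p (conj p_path (conj p_last p_uniq)).
by rewrite leqNgt (leq_ltn_trans p_le_w) // w_size.
Qed.
End WalkCount.

Lemma fixpoint_expansion (R : pzRingType) (V : lalgType R) (t : R) (X a : V) :
  X = 1 + t *: (X * a) ->
  forall N, X = \sum_(m < N) t ^+ m *: a ^+ m + t ^+ N *: (X * a ^+ N).
Proof.
move=> X_fix; elim=> [|N IHN]; first by rewrite big_ord0 add0r expr0 scale1r mulr1.
rewrite big_ord_recr /= {1}IHN -addrA {1}X_fix mulrDl mul1r scalerDr.
by rewrite -scalerAl scalerA -exprSr -mulrA -exprS.
Qed.

Section Resolvent.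
Variables (R : realType) (n : nat) (A : 'M[R]_n.+1).

Definition resolvent (t : R) : 'M[R]_n.+1 := invmx (1%:M - t *: A).

Definition mx_abs_sum : R := \sum_i \sum_j `|A i j|.

(* [mx_abs_sum] bounds every column sum of [|A|], so for small [t] the map
   [X |-> Y + t X A] contracts the largest entry by half. *)
Lemma mx_fixpoint_bound p (X Y : 'M[R]_(p.+1, n.+1)) (t b : R) :
  X = Y + t *: (X *m A) -> 0 <= t -> t * mx_abs_sum <= 2^-1 ->
  (forall i j, `|Y i j| <= b) -> forall i j, `|X i j| <= b *+ 2.
Proof.
move=> X_fix t_ge0 t_small Y_le.
pose absX (ij : 'I_p.+1 * 'I_n.+1) := `|X ij.1 ij.2|.
case: (@arg_maxP _ R _ (ord0, ord0) xpredT absX isT) => -[i0 j0] _ X_le.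
have {}X_le i j : `|X i j| <= `|X i0 j0| by apply: (X_le (i, j)).
suff max_le : `|X i0 j0| <= b + `|X i0 j0| / 2.
  by move=> i j; have := X_le i j; rewrite mulr2n; lra.
have col_le : \sum_l `|A l j0| <= mx_abs_sum.
  by apply: ler_sum => l _; rewrite (bigD1 j0) //= lerDl sumr_ge0.
rewrite {1}X_fix !mxE; apply: (le_trans (ler_normD _ _)); apply: lerD => //.
rewrite normrM ger0_norm //; apply: (le_trans (ler_wpM2l t_ge0 (ler_norm_sum _ _ _))).
apply: (@le_trans _ _ (t * (`|X i0 j0| * mx_abs_sum))).
  apply: ler_wpM2l => //; apply: le_trans (ler_wpM2l (normr_ge0 _) col_le).
  by rewrite mulr_sumr; apply: ler_sum => l _; rewrite normrM ler_wpM2r.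
by rewrite mulrCA ler_wpM2l // mulrC.
Qed.

Section SmallParameter.
Variable t : R.
Hypotheses (t_ge0 : 0 <= t) (t_small : t * mx_abs_sum <= 2^-1).

Lemma resolvent_unitmx : 1%:M - t *: A \in unitmx.
Proof.
rewrite unitmxE unitfE; apply/negP => /det0P[v v_neq0 v_ker].
have v_fix : v = 0 + t *: (v *m A).
  by apply/eqP; rewrite add0r -subr_eq0 -v_ker mulmxBr mulmx1 scalemxAr.
have zero_le i j : `|(0 : 'rV[R]_n.+1) i j| <= 0 by rewrite mxE normr0.
have v_le := mx_fixpoint_bound v_fix t_ge0 t_small zero_le.
move/eqP: v_neq0; apply; apply/matrixP => i j.
by apply/eqP; rewrite mxE -normr_le0 -(mul0rn _ 2) v_le.
Qed.

Lemma resolventE : resolvent t = 1 + t *: (resolvent t * A).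
Proof.
have := mulVmx resolvent_unitmx; rewrite -/(resolvent t) mulmxBr mulmx1 -scalemxAr.
by move/eqP; rewrite subr_eq idmxE mulmxE => /eqP.
Qed.

Lemma resolvent_bounded i j : `|resolvent t i j| <= 2.
Proof.
have id_le i' j' : `|(1%:M : 'M[R]_n.+1) i' j'| <= 1.
  by rewrite mxE; case: eqP; rewrite ?normr1 ?normr0.
have R_fix : resolvent t = 1%:M + t *: (resolvent t *m A).
  by rewrite {1}resolventE idmxE mulmxE.
exact: mx_fixpoint_bound R_fix t_ge0 t_small id_le i j.
Qed.

Lemma resolvent_entry i j k : (forall m, (m < k)%N -> (A ^+ m) i j = 0) ->
  resolvent t i j = t ^+ k * ((A ^+ k) i j + t * (resolvent t * A ^+ k.+1) i j).
Proof.
move=> Am_eq0; rewrite {1}(fixpoint_expansion resolventE k.+1) big_ord_recr /=.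
rewrite !mxE summxE big1 => [|m _]; last by rewrite mxE Am_eq0 ?mulr0.
by rewrite add0r exprSr mulrDr mulrA.
Qed.
End SmallParameter.
End Resolvent.

Lemma cvg0_mulr_bounded (R : realFieldType) T (F : set_system T) {FF : Filter F}
    (f g : T -> R) (C : R) :
  f @ F --> 0 -> (\forall x \near F, `|g x| <= C) -> (fun x => f x * g x) @ F --> 0.
Proof.
move=> f_cvg0 g_le; apply/cvgr0Pnorm_le => e e_gt0.
have C1_gt0 : 0 < `|C| + 1 by rewrite ltr_pwDr.
have f_small := (cvgr0Pnorm_le f).1 f_cvg0 _ (divr_gt0 e_gt0 C1_gt0).
near=> x; rewrite normrM.
have fx_le : `|f x| <= e / (`|C| + 1) by near: x; exact: f_small.
have gx_le : `|g x| <= `|C| + 1.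
  have gx_leC : `|g x| <= C by near: x; exact: g_le.
  by rewrite (le_trans gx_leC) // (le_trans (ler_norm C)) // lerDl.
by apply: le_trans (ler_pM _ _ fx_le gx_le) _; rewrite ?divfK ?gt_eqF.
Unshelve. all: end_near.
Qed.

Lemma invln_cvg0 (R : realType) : (fun x : R => (ln x)^-1) @ 0^'+ --> 0.
Proof.
apply/(ltr0_cvgV0 _).2; last exact: lnNy.
near=> x; rewrite ln_lt0 //; apply/andP; split.
- by near: x; exact: nbhs_right_gt.
- by near: x; exact: nbhs_right_lt ltr01.
Unshelve. all: end_near.
Qed.

Section ResolventParameter.
Variables (R : realType) (rho : R).

Lemma mulr_add1_cvg1 : (fun a => rho * a + 1) @ 0^'+ --> (1 : R).
Proof.
have lin_cvg : (fun a => rho * a + 1) @ 0^'+ --> (rho * 0 + 1 : R).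
  exact: cvgD (cvgM (cvg_cst _) (cvg_at_right_filter cvg_id)) (cvg_cst _).
by rewrite mulr0 add0r in lin_cvg.
Qed.

Lemma near_inv_addrV :
  \forall a \near 0^'+, 0 < rho * a + 1 /\ (rho + a^-1)^-1 = a / (rho * a + 1).
Proof.
near=> a.
have a_gt0 : 0 < a by near: a; exact: nbhs_right_gt.
have lin_gt0 : 0 < rho * a + 1 by near: a; exact: cvgr_gt 1 mulr_add1_cvg1 0 ltr01.
by split=> //; rewrite -invf_div mulrDl mul1r mulfK ?gt_eqF.
Unshelve. all: end_near.
Qed.

Lemma inv_addrV_cvg0 : (fun a => (rho + a^-1)^-1) @ 0^'+ --> 0.
Proof.
have frac_cvg : (fun a => a / (rho * a + 1)) @ 0^'+ --> (0 * 1^-1 : R).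
  exact: cvgM (cvg_at_right_filter cvg_id) (cvgV (oner_neq0 _) mulr_add1_cvg1).
rewrite mul0r in frac_cvg; apply: cvg_trans frac_cvg; apply: near_eq_cvg.
by apply: filterS near_inv_addrV => a [_ ->].
Qed.

Lemma near_inv_addrV_gt0 : \forall a \near 0^'+, 0 < (rho + a^-1)^-1.
Proof.
apply: filterS2 near_inv_addrV (nbhs_right_gt 0) => a [lin_gt0 ->] a_gt0.
exact: divr_gt0.
Qed.

Lemma ln_inv_addrV_cvg : (fun a => ln ((rho + a^-1)^-1) - ln a) @ 0^'+ --> 0.
Proof.
have ln_cvg : (fun a => - ln (rho * a + 1)) @ 0^'+ --> (- ln 1 : R).
  exact: cvgN (continuous_cvg _ (continuous_ln ltr01) mulr_add1_cvg1).
rewrite ln1 oppr0 in ln_cvg; apply: cvg_trans ln_cvg; apply: near_eq_cvg.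
apply: filterS2 near_inv_addrV (nbhs_right_gt 0) => a [lin_gt0 ->] a_gt0.
by rewrite ln_div ?posrE // addrAC subrr add0r.
Qed.
End ResolventParameter.

Section Theta.
Variables (R : realType) (n : nat).
Hypothesis n_gt0 : (0 < n)%N.

Let weight (a : R) := ln (expR 1 + a `^ (2 / n%:R)).

Lemma theta_weight_cvg1 : weight @ 0^'+ --> (1 : R).
Proof.
have sum_cvg : (fun a => expR 1 + a `^ (2 / n%:R)) @ 0^'+ --> (expR 1 + 0 : R).
  by apply: cvgD (cvg_cst _) (powR_cvg0 _); rewrite divr_gt0 ?ltr0n.
rewrite addr0 in sum_cvg; rewrite -(expRK 1).
exact: continuous_cvg _ (continuous_ln (expR_gt0 1)) sum_cvg.
Qed.

Lemma near_thetaE :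
  \forall a \near 0^'+, theta n a = weight a * ((a - 1) / ln a) /\ ln a < 0.
Proof.
apply: filterS2 (nbhs_right_gt 0) (nbhs_right_lt ltr01) => a a_gt0 a_lt1.
by rewrite /theta lt_eqF // ln_lt0 ?a_gt0.
Qed.

Lemma theta_cvg0 : (fun a => theta n a) @ 0^'+ --> (0 : R).
Proof.
have theta_cvg :
    (fun a => weight a * ((a - 1) / ln a)) @ 0^'+ --> (1 * ((0 - 1) * 0) : R).
  apply: cvgM; first exact: theta_weight_cvg1.
  apply: cvgM; last exact: invln_cvg0.
  by apply: cvgB; [exact: cvg_at_right_filter cvg_id | exact: cvg_cst].
rewrite mulr0 mulr0 in theta_cvg; apply: cvg_trans theta_cvg; apply: near_eq_cvg.
by apply: filterS near_thetaE => a [-> _].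
Qed.

Lemma theta_ln_cvg : (fun a => theta n a * ln a) @ 0^'+ --> (-1 : R).
Proof.
have theta_cvg : (fun a => weight a * (a - 1)) @ 0^'+ --> (1 * (0 - 1) : R).
  exact: cvgM theta_weight_cvg1 (cvgB (cvg_at_right_filter cvg_id) (cvg_cst _)).
rewrite mul1r sub0r in theta_cvg; apply: cvg_trans theta_cvg; apply: near_eq_cvg.
by apply: filterS near_thetaE => a [-> ln_lt0]; rewrite -mulrA mulfVK ?lt_eqF.
Qed.
End Theta.

Section ResolventAsymptotics.
Variables (R : realType) (n : nat) (A : 'M[R]_n.+1).
Context {T : Type} {F : set_system T} {FF : Filter F}.
Variable t : T -> R.
Hypotheses (t_cvg0 : t @ F --> 0) (t_gt0 : \forall x \near F, 0 < t x).

Lemma near_small_parameter :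
  \forall x \near F, 0 <= t x /\ t x * mx_abs_sum A <= 2^-1.
Proof.
have abs_sum_ge0 : 0 <= mx_abs_sum A by do 2!apply: sumr_ge0 => ? _.
have sum1_gt0 : 0 < mx_abs_sum A + 1 by lra.
have bound_gt0 : 0 < 2^-1 / (mx_abs_sum A + 1) :> R by rewrite divr_gt0.
near=> x; have tx_gt0 : 0 < t x by near: x.
split; first exact: ltW.
have tx_lt : t x < 2^-1 / (mx_abs_sum A + 1).
  by near: x; exact: cvgr_lt 0 t_cvg0 _ bound_gt0.
have : t x * (mx_abs_sum A + 1) <= 2^-1 by rewrite -ler_pdivlMr // ltW.
lra.
Unshelve. all: end_near.
Qed.

Lemma near_resolvent_bounded :
  \forall x \near F, forall i j, `|resolvent A (t x) i j| <= 2.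
Proof.
apply: filterS near_small_parameter => x [tx_ge0 tx_small] i j.
exact: resolvent_bounded.
Qed.

Lemma resolvent_remainder_cvg0 (N : 'M[R]_n.+1) i j :
  (fun x => t x * (resolvent A (t x) * N) i j) @ F --> 0.
Proof.
apply: (cvg0_mulr_bounded (C := \sum_l 2 * `|N l j|)) t_cvg0 _.
apply: filterS near_resolvent_bounded => x R_le.
rewrite -mulmxE mxE; apply: le_trans (ler_norm_sum _ _ _) _.
by apply: ler_sum => l _; rewrite normrM ler_wpM2r.
Qed.

Lemma ln_resolvent_cvg i j k : 0 < (A ^+ k) i j ->
  (forall m, (m < k)%N -> (A ^+ m) i j = 0) ->
  (fun x => ln (resolvent A (t x) i j) - k%:R * ln (t x)) @ F --> ln ((A ^+ k) i j).
Proof.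
move=> Ak_gt0 Am_eq0; set c := (A ^+ k) i j.
have lead_cvg : (fun x => c + t x * (resolvent A (t x) * A ^+ k.+1) i j) @ F --> c.
  rewrite -[X in _ --> X]addr0.
  exact: cvgD (cvg_cst _) (resolvent_remainder_cvg0 _ i j).
apply: cvg_trans (continuous_cvg _ (continuous_ln Ak_gt0) lead_cvg); apply: near_eq_cvg.
apply: filterS3 near_small_parameter t_gt0 (cvgr_gt c lead_cvg 0 Ak_gt0).
move=> x [tx_ge0 tx_small] tx_gt0 lead_x_gt0.
rewrite (resolvent_entry tx_ge0 tx_small Am_eq0) lnM ?posrE ?exprn_gt0 //.
by rewrite /= lnXn // mulr_natl addrAC subrr add0r.
Qed.

Lemma ln_resolvent_diag_cvg0 l : (fun x => ln (resolvent A (t x) l l)) @ F --> 0.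
Proof.
have := @ln_resolvent_cvg l l 0; rewrite expr0 mxE eqxx ln1.
by under eq_fun do rewrite mul0r subr0; apply => // m.
Qed.
End ResolventAsymptotics.

Theorem theorem3 (R : realType) (n : nat) (A : 'M[R]_n) :
  (2 <= n)%N ->
  wadj_matrix A ->
  connected_graph A ->
  forall (i j : 'I_n) (k : nat), sp_dist A i j k ->
    (fun alpha : R => dW A alpha i j) @ 0^'+ --> (k%:R : R).
Proof.
case: n A => [//|n] A _ [A_ge0 _] _ i j k ij_dist.
have [Ak_gt0 Am_eq0] := sp_dist_expmx A_ge0 ij_dist.
pose t a := (specrad A + a^-1)^-1.
pose lnR a l l' := ln (resolvent A (t a) l l').
have t_cvg0 := inv_addrV_cvg0 (specrad A).
have t_gt0 := near_inv_addrV_gt0 (specrad A).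
have theta_ln_t : (fun a => theta n.+1 a * ln (t a)) @ 0^'+ --> (-1 + 0 * 0 : R).
  have ln_t a : ln (t a) = ln a + (ln (t a) - ln a) by rewrite addrC subrK.
  under eq_fun do rewrite ln_t mulrDr.
  exact: cvgD (theta_ln_cvg _) (cvgM (theta_cvg0 _) (ln_inv_addrV_cvg _)).
have dWE : (fun a => dW A a i j) = fun a => theta n.+1 a *
    ((lnR a i i + lnR a j j) / 2 - (lnR a i j - k%:R * ln (t a))) -
    k%:R * (theta n.+1 a * ln (t a)).
  by apply/funext => a; rewrite /dW /lnR /resolvent_t; ring.
have dW_cvg : (fun a => dW A a i j) @ 0^'+ -->
    (0 * ((0 + 0) / 2 - ln ((A ^+ k) i j)) - k%:R * (-1 + 0 * 0) : R).
  rewrite dWE /lnR.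
  apply: cvgB (cvgM (theta_cvg0 _) _) (cvgM (cvg_cst _) theta_ln_t) => //.
  apply: cvgB (cvgM (cvgD _ _) (cvg_cst _)) (ln_resolvent_cvg t_cvg0 t_gt0 Ak_gt0 Am_eq0).
  - exact: (ln_resolvent_diag_cvg0 A (t := t) t_cvg0 t_gt0 i).
  - exact: (ln_resolvent_diag_cvg0 A (t := t) t_cvg0 t_gt0 j).
by move: dW_cvg; congr (_ --> _); ring.
Qed.
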